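(* The following equations are derivable in equational logic from $\mathsf{Md}_\bot$: $0\cdot 0=0$; $-0=0$; $0\cdot x=0\cdot(-x)$; $0\cdot(x\cdot y)=0\cdot(x+y)$; $-(x\cdot y)=x\cdot(-y)$; $(-1)\cdot x=-x$; $(-x)^{-1}=-(x^{-1})$; $(x\cdot x^{-1})\cdot x^{-1}=x^{-1}$; $-\bot=\bot$; $\bot^{-1}=\bot$.
   Context: The signature has one sort, constants $0,1,\bot$, binary operations $+,\cdot$ and unary operations $-$ and $(\,\cdot\,)^{-1}$; $^{-1}$ binds stronger than $\cdot$, which binds stronger than $+$. $\mathsf{Md}_\bot$ is the set of equations (variables universally quantified): $(x+y)+z=x+(y+z)$; $x+y=y+x$; $x+0=x$; $x+(-x)=0\cdot x$; $(x\cdot y)\cdot z=x\cdot(y\cdot z)$; $x\cdot y=y\cdot x$; $1\cdot x=x$; $x\cdot(y+z)=x\cdot y+x\cdot z$; $-(-x)=x$; $0\cdot(x\cdot x)=0\cdot x$; $(x^{-1})^{-1}=x+0\cdot x^{-1}$; $x\cdot x^{-1}=1+0\cdot x^{-1}$; $(x\cdot y)^{-1}=x^{-1}\cdot y^{-1}$; $1^{-1}=1$; $0^{-1}=\bot$; $x+\bot=\bot$; $x\cdot\bot=\bot$. *)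

Inductive term : Type :=
| Var  : nat -> term
| Zero : term
| One  : term
| Bot  : term
| Add  : term -> term -> term
| Mul  : term -> term -> term
| Neg  : term -> term
| Inv  : term -> term.

Fixpoint subst (s : nat -> term) (t : term) : term :=
  match t with
  | Var n => s n
  | Zero => Zero
  | One => One
  | Bot => Bot
  | Add a b => Add (subst s a) (subst s b)
  | Mul a b => Mul (subst s a) (subst s b)
  | Neg a => Neg (subst s a)
  | Inv a => Inv (subst s a)
  end.

Definition vx := Var 0.
Definition vy := Var 1.
Definition vz := Var 2.

Inductive Md_bot : term -> term -> Prop :=
| ax_add_assoc : Md_bot (Add (Add vx vy) vz) (Add vx (Add vy vz))
| ax_add_comm  : Md_bot (Add vx vy) (Add vy vx)
| ax_add_0     : Md_bot (Add vx Zero) vx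
| ax_add_neg   : Md_bot (Add vx (Neg vx)) (Mul Zero vx)
| ax_mul_assoc : Md_bot (Mul (Mul vx vy) vz) (Mul vx (Mul vy vz))
| ax_mul_comm  : Md_bot (Mul vx vy) (Mul vy vx)
| ax_mul_1     : Md_bot (Mul One vx) vx
| ax_distr     : Md_bot (Mul vx (Add vy vz)) (Add (Mul vx vy) (Mul vx vz))
| ax_neg_neg   : Md_bot (Neg (Neg vx)) vx
| ax_zero_sq   : Md_bot (Mul Zero (Mul vx vx)) (Mul Zero vx)
| ax_inv_inv   : Md_bot (Inv (Inv vx)) (Add vx (Mul Zero (Inv vx)))
| ax_mul_inv   : Md_bot (Mul vx (Inv vx)) (Add One (Mul Zero (Inv vx)))
| ax_inv_mul   : Md_bot (Inv (Mul vx vy)) (Mul (Inv vx) (Inv vy))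
| ax_inv_1     : Md_bot (Inv One) One
| ax_inv_0     : Md_bot (Inv Zero) Bot
| ax_add_bot   : Md_bot (Add vx Bot) Bot
| ax_mul_bot   : Md_bot (Mul vx Bot) Bot.

Inductive derivable (E : term -> term -> Prop) : term -> term -> Prop :=
| d_ax    : forall l r, E l r -> derivable E l r
| d_refl  : forall t, derivable E t t
| d_sym   : forall t u, derivable E t u -> derivable E u t
| d_trans : forall t u v, derivable E t u -> derivable E u v -> derivable E t v
| d_subst : forall (s : nat -> term) t u,
    derivable E t u -> derivable E (subst s t) (subst s u)
| d_add   : forall t t' u u', derivable E t t' -> derivable E u u' ->
    derivable E (Add t u) (Add t' u')
| d_mul   : forall t t' u u', derivable E t t' -> derivable E u u' ->
    derivable E (Mul t u) (Mul t' u')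
| d_neg   : forall t t', derivable E t t' -> derivable E (Neg t) (Neg t')
| d_inv   : forall t t', derivable E t t' -> derivable E (Inv t) (Inv t').

(* The terms 0·x behave like idempotents, (0·x)(0·x) = 0·x and
   0·x + 0·x = 0·x, and satisfy x + 0·x = x.  With u = 0·x and v = 0·y one
   gets u·v = 0·(x·y) and u·v + u = u·v, so expanding the idempotent
   (u + v)^2 yields u + v = u·v, i.e. 0·(x + y) = 0·(x·y).
   The sign equations come from (-1)·x = -x, which follows from
   (-1)·x + x = (-1 + 1)·x = 0·x; the inverse equations then use
   (-1)^-1 = -1, obtained from ((-1)^-1)^2 = 1. *)

From Stdlib Require Import Setoid Morphisms.
From Stdlib Require List.
Import List.ListNotations.

Add Parametric Relation (E : term -> term -> Prop) : term (derivable E)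
  reflexivity proved by (d_refl E)
  symmetry proved by (d_sym E)
  transitivity proved by (d_trans E) as derivable_rel.

Add Parametric Morphism (E : term -> term -> Prop) : Add
  with signature derivable E ==> derivable E ==> derivable E as Add_derivable.
Proof. intros; apply d_add; assumption. Qed.

Add Parametric Morphism (E : term -> term -> Prop) : Mul
  with signature derivable E ==> derivable E ==> derivable E as Mul_derivable.
Proof. intros; apply d_mul; assumption. Qed.

Add Parametric Morphism (E : term -> term -> Prop) : Neg
  with signature derivable E ==> derivable E as Neg_derivable.
Proof. intros; apply d_neg; assumption. Qed.

Add Parametric Morphism (E : term -> term -> Prop) : Inv
  with signature derivable E ==> derivable E as Inv_derivable.
Proof. intros; apply d_inv; assumption. Qed.

Definition subst_list (ts : list term) : nat -> term := fun n => List.nth n ts Zero.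

Lemma derivable_instance (E : term -> term -> Prop) (s : nat -> term) l r :
  E l r -> derivable E (subst s l) (subst s r).
Proof. intro Elr; apply d_subst, d_ax, Elr. Qed.

Local Notation "a == b" := (derivable Md_bot a b) (at level 70).

Section MdBotInstances.

Let inst ts {l r} (ax : Md_bot l r) := derivable_instance Md_bot (subst_list ts) l r ax.

Lemma add_assoc a b c : Add (Add a b) c == Add a (Add b c).
Proof. exact (inst [a; b; c] ax_add_assoc). Qed.
Lemma add_comm a b : Add a b == Add b a.
Proof. exact (inst [a; b] ax_add_comm). Qed.
Lemma add_0_r a : Add a Zero == a.
Proof. exact (inst [a] ax_add_0). Qed.
Lemma add_neg_r a : Add a (Neg a) == Mul Zero a.
Proof. exact (inst [a] ax_add_neg). Qed.
Lemma mul_assoc a b c : Mul (Mul a b) c == Mul a (Mul b c).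
Proof. exact (inst [a; b; c] ax_mul_assoc). Qed.
Lemma mul_comm a b : Mul a b == Mul b a.
Proof. exact (inst [a; b] ax_mul_comm). Qed.
Lemma mul_1_l a : Mul One a == a.
Proof. exact (inst [a] ax_mul_1). Qed.
Lemma mul_add_distr_l a b c : Mul a (Add b c) == Add (Mul a b) (Mul a c).
Proof. exact (inst [a; b; c] ax_distr). Qed.
Lemma neg_involutive a : Neg (Neg a) == a.
Proof. exact (inst [a] ax_neg_neg). Qed.
Lemma zero_mul_square a : Mul Zero (Mul a a) == Mul Zero a.
Proof. exact (inst [a] ax_zero_sq). Qed.
Lemma inv_involutive a : Inv (Inv a) == Add a (Mul Zero (Inv a)).
Proof. exact (inst [a] ax_inv_inv). Qed.
Lemma mul_inv_r a : Mul a (Inv a) == Add One (Mul Zero (Inv a)).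
Proof. exact (inst [a] ax_mul_inv). Qed.
Lemma inv_mul a b : Inv (Mul a b) == Mul (Inv a) (Inv b).
Proof. exact (inst [a; b] ax_inv_mul). Qed.
Lemma inv_1 : Inv One == One.
Proof. exact (d_ax _ _ _ ax_inv_1). Qed.
Lemma inv_0 : Inv Zero == Bot.
Proof. exact (d_ax _ _ _ ax_inv_0). Qed.
Lemma add_bot_r a : Add a Bot == Bot.
Proof. exact (inst [a] ax_add_bot). Qed.
Lemma mul_bot_r a : Mul a Bot == Bot.
Proof. exact (inst [a] ax_mul_bot). Qed.

End MdBotInstances.

Lemma mul_1_r a : Mul a One == a.
Proof. rewrite mul_comm; apply mul_1_l. Qed.

Lemma mul_add_distr_r a b c : Mul (Add a b) c == Add (Mul a c) (Mul b c).
Proof. rewrite mul_comm, mul_add_distr_l, (mul_comm c a), (mul_comm c b); reflexivity. Qed.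

Lemma add_neg_one : Add One (Neg One) == Zero.
Proof. rewrite add_neg_r; apply (mul_1_r Zero). Qed.

Lemma zero_mul_neg_one : Mul Zero (Neg One) == Zero.
Proof.
  rewrite <- (add_neg_r (Neg One)), neg_involutive, add_comm.
  apply add_neg_one.
Qed.

Lemma zero_mul_zero : Mul Zero Zero == Zero.
Proof.
  rewrite <- add_neg_one at 2.
  rewrite mul_add_distr_l, (mul_1_r Zero), zero_mul_neg_one; apply add_0_r.
Qed.

Lemma neg_zero : Neg Zero == Zero.
Proof.
  rewrite <- (add_0_r (Neg Zero)), add_comm, add_neg_r; apply zero_mul_zero.
Qed.

Lemma zero_mul_neg x : Mul Zero x == Mul Zero (Neg x).
Proof.
  rewrite <- add_neg_r, <- add_neg_r, neg_involutive; apply add_comm.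
Qed.

Lemma add_zero_mul x : Add x (Mul Zero x) == x.
Proof.
  rewrite <- (mul_1_r x) at 1.
  rewrite (mul_comm Zero x), <- mul_add_distr_l, add_0_r; apply mul_1_r.
Qed.

Lemma zero_mul_zero_mul y : Mul Zero (Mul Zero y) == Mul Zero y.
Proof. rewrite <- mul_assoc, zero_mul_zero; reflexivity. Qed.

Lemma zero_mul_idem x : Mul (Mul Zero x) (Mul Zero x) == Mul Zero x.
Proof.
  rewrite mul_assoc, (mul_comm x), mul_assoc, zero_mul_zero_mul; apply zero_mul_square.
Qed.

Lemma zero_mul_add_idem x : Add (Mul Zero x) (Mul Zero x) == Mul Zero x.
Proof. rewrite <- (zero_mul_zero_mul x) at 2; apply add_zero_mul. Qed.

Lemma zero_mul_mul_zero_mul x y : Mul (Mul Zero x) (Mul Zero y) == Mul Zero (Mul x y).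
Proof.
  rewrite mul_assoc, <- (mul_assoc x), (mul_comm x), mul_assoc,
    zero_mul_zero_mul; reflexivity.
Qed.

Lemma zero_mul_mul_l x t : Mul (Mul Zero x) t == Mul x (Mul Zero t).
Proof. rewrite (mul_comm Zero x); apply mul_assoc. Qed.

Lemma zero_mul_absorb x y :
  Add (Mul (Mul Zero x) (Mul Zero y)) (Mul Zero x) == Mul (Mul Zero x) (Mul Zero y).
Proof.
  rewrite <- (mul_1_r (Mul Zero x)) at 2.
  rewrite <- mul_add_distr_l, !zero_mul_mul_l, mul_add_distr_l, (mul_1_r Zero),
    add_0_r; reflexivity.
Qed.

Lemma zero_mul_mul x y : Mul Zero (Mul x y) == Mul Zero (Add x y).
Proof.
  rewrite mul_add_distr_l, <- zero_mul_mul_zero_mul.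
  set (u := Mul Zero x); set (v := Mul Zero y).
  assert (absorb_u : Add (Mul u v) u == Mul u v) by apply zero_mul_absorb.
  assert (absorb_v : Add (Mul u v) v == Mul u v).
  { unfold u, v; rewrite (mul_comm (Mul Zero x)); apply zero_mul_absorb. }
  assert (uv_idem : Add (Mul u v) (Mul u v) == Mul u v).
  { unfold u, v; rewrite zero_mul_mul_zero_mul; apply zero_mul_add_idem. }
  assert (square : Mul (Add u v) (Add u v) == Add u v).
  { unfold u, v; rewrite <- mul_add_distr_l; apply zero_mul_idem. }
  assert (expand : Mul (Add u v) (Add u v) == Add (Add (Mul u v) u) (Add (Mul u v) v)).
  { rewrite mul_add_distr_l, (mul_comm (Add u v) u), (mul_comm (Add u v) v),
      !mul_add_distr_l, (mul_comm v u).
    unfold u, v; rewrite !zero_mul_idem, (add_comm (Mul Zero x)); reflexivity. }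
  rewrite <- square, expand, absorb_u, absorb_v; symmetry; apply uv_idem.
Qed.

Lemma mul_neg_one_l x : Mul (Neg One) x == Neg x.
Proof.
  assert (zero_mul_m : Mul Zero (Mul (Neg One) x) == Mul Zero x).
  { rewrite <- mul_assoc, zero_mul_neg_one; reflexivity. }
  assert (add_m : Add (Mul (Neg One) x) x == Mul Zero x).
  { rewrite <- (mul_1_l x) at 2.
    rewrite <- mul_add_distr_r, add_comm, add_neg_one; reflexivity. }
  rewrite <- (add_zero_mul (Mul (Neg One) x)), zero_mul_m, <- add_neg_r,
    <- add_assoc, add_m, (zero_mul_neg x), add_comm; apply add_zero_mul.
Qed.

Lemma neg_mul_r x y : Neg (Mul x y) == Mul x (Neg y).
Proof.
  rewrite <- (mul_neg_one_l (Mul x y)), <- (mul_neg_one_l y), <- mul_assoc,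
    (mul_comm (Neg One) x); apply mul_assoc.
Qed.

Lemma inv_neg_one : Inv (Neg One) == Neg One.
Proof.
  set (m := Neg One).
  assert (m_sq : Mul m m == One).
  { unfold m; rewrite mul_neg_one_l; apply neg_involutive. }
  assert (inv_sq : Mul (Inv m) (Inv m) == One).
  { rewrite <- inv_mul, m_sq; apply inv_1. }
  assert (m_inv : Mul m (Inv m) == One).
  { rewrite mul_inv_r, <- zero_mul_square, inv_sq, (mul_1_r Zero); apply add_0_r. }
  rewrite <- (mul_1_l (Inv m)), <- m_sq, mul_assoc, m_inv; apply mul_1_r.
Qed.

Lemma inv_neg x : Inv (Neg x) == Neg (Inv x).
Proof.
  rewrite <- (mul_neg_one_l x), <- (mul_neg_one_l (Inv x)), inv_mul, inv_neg_one;
    reflexivity.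
Qed.

Lemma mul_inv_r_mul_inv x : Mul (Mul x (Inv x)) (Inv x) == Inv x.
Proof.
  rewrite mul_inv_r, mul_comm, mul_add_distr_l, mul_1_r, mul_comm, mul_assoc,
    zero_mul_square; apply add_zero_mul.
Qed.

Lemma neg_bot : Neg Bot == Bot.
Proof. rewrite <- (mul_neg_one_l Bot); apply mul_bot_r. Qed.

Lemma inv_bot : Inv Bot == Bot.
Proof.
  rewrite <- inv_0 at 1.
  rewrite inv_involutive, inv_0, mul_bot_r; apply add_bot_r.
Qed.

Theorem proposition2p1 :
  derivable Md_bot (Mul Zero Zero) Zero /\
  derivable Md_bot (Neg Zero) Zero /\
  derivable Md_bot (Mul Zero vx) (Mul Zero (Neg vx)) /\
  derivable Md_bot (Mul Zero (Mul vx vy)) (Mul Zero (Add vx vy)) /\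
  derivable Md_bot (Neg (Mul vx vy)) (Mul vx (Neg vy)) /\
  derivable Md_bot (Mul (Neg One) vx) (Neg vx) /\
  derivable Md_bot (Inv (Neg vx)) (Neg (Inv vx)) /\
  derivable Md_bot (Mul (Mul vx (Inv vx)) (Inv vx)) (Inv vx) /\
  derivable Md_bot (Neg Bot) Bot /\
  derivable Md_bot (Inv Bot) Bot.
Proof.
  repeat split.
  - exact zero_mul_zero.
  - exact neg_zero.
  - apply zero_mul_neg.
  - apply zero_mul_mul.
  - apply neg_mul_r.
  - apply mul_neg_one_l.
  - apply inv_neg.
  - apply mul_inv_r_mul_inv.
  - exact neg_bot.
  - exact inv_bot.
Qed.
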